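(* There is a sufficiently small $\epsilon>0$ such that, for each combinatorial line $L$ of $\mathrm{HJ}(d,n)$, the affine function $g^\epsilon_L$ vanishes on $\nu(P^\epsilon_L)$ and is positive on $\nu(P^\epsilon\setminus P^\epsilon_L)$.
   Context: Combinatorial lines and $\mathrm{HJ}(d,n)$: for $\tau\in([d]\cup\{*\})^n\setminus[d]^n$ and $k\in\mathbb{R}$, $\sigma(\tau,k)$ is $\tau$ with every $*$ replaced by $k$; $L_\tau=\{\sigma(\tau,k):k\in[d]\}$, and $\mathrm{HJ}(d,n)$ is the hypergraph on $[d]^n$ of all combinatorial lines. Vectors $v_1,\dots,v_n\in\mathbb{R}^2$ have positive $x$-components; $p_\sigma=\sum_i\sigma_iv_i$; $P=\{p_\sigma:\sigma\in[d]^n\}$ consists of distinct points; for a line $L$, $P_L=\{p_\sigma:\sigma\in L\}$ spans the line $S_L: y=a_Lx+b_L$, and it is assumed that $S_L\cap P=P_L$ for every line $L$. $\nu(x,y)=(x^2,xy,y^2,x,y)$. For $\epsilon>0$, $\phi_\epsilon(x,y)=(x,y+\sqrt{\epsilon x})$, $P^\epsilon=\phi_\epsilon(P)$, $P^\epsilon_L=\phi_\epsilon(P_L)$, $f^\epsilon_L(x,y)=(y-a_Lx-b_L)^2-\epsilon x$, and $g^\epsilon_L:\mathbb{R}^5\to\mathbb{R}$ is the affine function with $g^\epsilon_L(x^2,xy,y^2,x,y)=f^\epsilon_L(x,y)$. *)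

From HB Require Import structures.
From mathcomp Require Import all_boot all_order all_algebra.
From mathcomp Require Import reals.
Set Implicit Arguments. Unset Strict Implicit. Unset Printing Implicit Defensive.
Import Order.TTheory GRing.Theory Num.Theory.
Local Open Scope ring_scope.

(* [d] = {1,...,d} is encoded by 'I_d (the ordinal i stands for i+1).
   Words sigma in [d]^n : {ffun 'I_n -> 'I_d}.
   Templates tau in ([d] U {*})^n : {ffun 'I_n -> option 'I_d}, None = *. *)

Definition word (d n : nat) := {ffun 'I_n -> 'I_d}.
Definition template (d n : nat) := {ffun 'I_n -> option 'I_d}.

Definition is_template d n (tau : template d n) : bool :=
  [exists i, tau i == None].

Definition subst_star d n (tau : template d n) (k : 'I_d) : word d n :=
  [ffun i => odflt k (tau i)].

Definition in_line d n (tau : template d n) (s : word d n) : Prop :=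
  exists k : 'I_d, s = subst_star tau k.

Definition letter (R : pzRingType) d (i : 'I_d) : R := (i.+1)%:R.

Definition pt (R : realType) d n (v : 'I_n -> R * R) (s : word d n) : R * R :=
  (\sum_(i < n) letter R (s i) * (v i).1, \sum_(i < n) letter R (s i) * (v i).2).

Definition phi (R : realType) (eps : R) (p : R * R) : R * R :=
  (p.1, p.2 + Num.sqrt (eps * p.1)).

Definition nu (R : realType) (p : R * R) : 'rV[R]_5 :=
  \row_(j < 5) [:: p.1 ^+ 2; p.1 * p.2; p.2 ^+ 2; p.1; p.2]`_j.

Definition f_eps (R : realType) (a b eps : R) (p : R * R) : R :=
  (p.2 - a * p.1 - b) ^+ 2 - eps * p.1.

(* g^eps_L : the affine function on R^5 with g(nu(x,y)) = f^eps_L(x,y):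
   (y - a x - b)^2 - eps x
     = a^2 x^2 - 2a xy + y^2 + (2ab - eps) x - 2b y + b^2 *)
Definition g_eps (R : realType) (a b eps : R) (z : 'rV[R]_5) : R :=
  a ^+ 2 * z ord0 0 - 2 * a * z ord0 1 + z ord0 2
  + (2 * a * b - eps) * z ord0 3 - 2 * b * z ord0 4 + b ^+ 2.

From HB Require Import structures.
From mathcomp Require Import all_boot all_order all_algebra.
From mathcomp Require Import reals.
From mathcomp Require Import ring lra.
Import Order.TTheory GRing.Theory Num.Theory.
Local Open Scope ring_scope.

(* Write delta := y - a x - b for the vertical offset of p = (x, y) from S_L
   and r := sqrt (eps x).  Then f_L^eps (phi_eps p) = (delta + r)^2 - r^2,
   which is 0 on S_L and equals delta (delta + 2 r) > 0 as soon as
   4 eps x < delta^2.  Off the line delta <> 0 and x > 0, and there are only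
   finitely many pairs (L, sigma), so one eps > 0 works for all of them. *)

Section AffineLift.
Variable R : realType.
Implicit Types (a b eps : R) (p : R * R).

Lemma g_eps_nu a b eps p : g_eps a b eps (nu p) = f_eps a b eps p.
Proof. by rewrite /g_eps /nu /f_eps !mxE /=; ring. Qed.

Lemma f_eps_phi a b eps p : 0 <= eps * p.1 ->
  f_eps a b eps (phi eps p) =
    (p.2 - a * p.1 - b + Num.sqrt (eps * p.1)) ^+ 2 - Num.sqrt (eps * p.1) ^+ 2.
Proof. by move=> ge0; rewrite /f_eps /phi /= sqr_sqrtr //; ring. Qed.

Lemma sqrDr_subr_gt0 (delta r : R) :
  0 <= r -> 4 * r ^+ 2 < delta ^+ 2 -> 0 < (delta + r) ^+ 2 - r ^+ 2.
Proof.
move=> r_ge0 small_r.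
have -> : (delta + r) ^+ 2 - r ^+ 2 = delta * (delta + 2 * r) by ring.
have [delta_gt0 | delta_lt0 | delta0] := ltrgt0P delta.
- by apply: mulr_gt0; lra.
- have sum_lt0 : delta + 2 * r < 0 by nra.
  by rewrite -mulrNN; apply: mulr_gt0; lra.
- by move: small_r; rewrite delta0; nra.
Qed.

Lemma f_eps_phi_eq0 a b eps p :
  0 <= eps * p.1 -> p.2 = a * p.1 + b -> f_eps a b eps (phi eps p) = 0.
Proof. by move=> ge0 on_line; rewrite f_eps_phi // on_line; ring. Qed.

Lemma f_eps_phi_gt0 a b eps p : 0 <= eps * p.1 ->
  4 * (eps * p.1) < (p.2 - a * p.1 - b) ^+ 2 -> 0 < f_eps a b eps (phi eps p).
Proof.
move=> ge0 small_eps; rewrite f_eps_phi //.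
by apply: sqrDr_subr_gt0; rewrite ?sqrtr_ge0 // sqr_sqrtr.
Qed.

End AffineLift.

Lemma finite_pos_lower_bound (R : realFieldType) (I : finType) (c : I -> R) :
  exists2 eps : R, 0 < eps & forall i, 0 < c i -> eps < c i.
Proof.
pose S := \sum_(i | 0 < c i) (c i)^-1.
have S_ge0 : 0 <= S by apply: sumr_ge0 => i /ltW; rewrite invr_ge0.
exists (1 + S)^-1; first by rewrite invr_gt0; lra.
move=> i c_gt0; rewrite -[c i]invrK ltf_pV2 ?posrE ?invr_gt0 //; last lra.
rewrite /S (bigD1 i) //=.
have : 0 <= \sum_(j | (0 < c j) && (j != i)) (c j)^-1.
  by apply: sumr_ge0 => j /andP[/ltW]; rewrite invr_ge0.
lra.
Qed.

Lemma pt1_gt0 (R : realType) d n (v : 'I_n -> R * R) (s : word d n) :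
  (0 < n)%N -> (forall i, 0 < (v i).1) -> 0 < (pt v s).1.
Proof.
move=> n_gt0 v_gt0; rewrite /pt /= (bigD1 (Ordinal n_gt0)) //=.
apply: ltr_pwDl; first by rewrite mulr_gt0 // /letter ltr0n.
by apply: sumr_ge0 => j _; rewrite mulr_ge0 // ?ler0n // ltW.
Qed.

Theorem lemma2p6 (R : realType) (d n : nat) (v : 'I_n -> R * R)
  (a b : template d n -> R)
  (hv : forall i, 0 < (v i).1)
  (hdistinct : injective (@pt R d n v))
  (hS : forall tau : template d n, is_template tau ->
          forall s : word d n,
            (pt v s).2 = a tau * (pt v s).1 + b tau <-> in_line tau s) :
  exists eps : R, 0 < eps /\
    forall tau : template d n, is_template tau ->
      (forall s : word d n, in_line tau s ->
         g_eps (a tau) (b tau) eps (nu (phi eps (pt v s))) = 0) /\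
      (forall s : word d n,
         (forall s' : word d n, in_line tau s' ->
            phi eps (pt v s) <> phi eps (pt v s')) ->
         0 < g_eps (a tau) (b tau) eps (nu (phi eps (pt v s)))).
Proof.
pose offset tau (s : word d n) := (pt v s).2 - a tau * (pt v s).1 - b tau.
have [eps eps_gt0 eps_small] := finite_pos_lower_bound R _
  (fun ts => offset ts.1 ts.2 ^+ 2 / (4 * (pt v ts.2).1)).
exists eps; split => // tau tau_template.
have x_gt0 (s : word d n) : 0 < (pt v s).1.
  case/existsP: tau_template => i _.
  by apply: pt1_gt0 => //; apply: leq_ltn_trans (ltn_ord i).
have epsx_ge0 (s : word d n) : 0 <= eps * (pt v s).1 by rewrite mulr_ge0 // ltW.
split=> s; rewrite g_eps_nu.
  by move=> /(hS _ tau_template) on_line; apply: f_eps_phi_eq0.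
move=> off_line; apply: f_eps_phi_gt0 => //.
have offset_neq0 : offset tau s != 0.
  apply/eqP => offset0; apply: (off_line s) => //.
  by apply/(hS _ tau_template); move: offset0; rewrite /offset; lra.
have : eps < offset tau s ^+ 2 / (4 * (pt v s).1).
  by apply: (eps_small (tau, s)); rewrite divr_gt0 ?exprn_even_gt0 ?mulr_gt0.
by rewrite ltr_pdivlMr ?mulr_gt0 // /offset; lra.
Qed.
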